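(* Let $M_n=V\,{\rm diag}(\Lambda_{n1},\dots,\Lambda_{nd})V^{-1}$ and $\hat M_n=M_n+\sigma W_n$, $n=1,\dots,N$, with $V$ real invertible, $\Lambda_{ni}$ real, and $\|W_n\|\le1$; let $U_\circ$ be orthogonal with ${\rm low}(U_\circ^TM_nU_\circ)=0$ for all $n$; let $Y$ be skew-symmetric with $\|Y\|=1$ and $X$ any skew-symmetric matrix. For $\alpha,\sigma$ put $U=U_\circ e^{\alpha Y}$, $K_n=U^T\hat M_nU$ and $$g_n={\rm low}(K_n),\quad\dot g_n={\rm low}([K_n,X]),\quad\ddot g_n={\rm low}([[K_n,X],X]),$$ regarded as functions of $(\alpha,\sigma)$; let $\partial_\alpha$, $\partial_\sigma$ denote partial derivatives at $(\alpha,\sigma)=(0,0)$, and let $g_n,\dot g_n,\ddot g_n$ without derivative denote their values at $(0,0)$. Define $$\tilde A_\alpha=\Big|\sum_{n=1}^N{\rm Tr}\big(\dot g_n^T\partial_\alpha\dot g_n+\dot g_n^T\partial_\alpha\dot g_n+\ddot g_n^T\partial_\alpha g_n+\partial_\alpha g_n^T\ddot g_n\big)\Big|,$$ $$\tilde A_\sigma=\Big|\sum_{n=1}^N{\rm Tr}\big(\dot g_n^T\partial_\sigma\dot g_n+\partial_\sigma\dot g_n^T\dot g_n+\ddot g_n^T\partial_\sigma g_n+\partial_\sigma g_n^T\ddot g_n\big)\Big|.$$ Then $\tilde A_\alpha\le A_\alpha\|X\|^2$ and $\tilde A_\sigma\le A_\sigma\|X\|^2$ with $A_\alpha=32\sum_{n=1}^N\|M_n\|^2$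 and $A_\sigma=16\sqrt N\sqrt{\sum_{n=1}^N\|M_n\|^2}$.
   Context: All matrices are real $d\times d$. ${\rm low}(A)$ is the strictly lower-triangular part of $A$; $[A,B]=AB-BA$; $\|\cdot\|$ is the Frobenius norm; $e^{\alpha Y}$ is the matrix exponential. *)

From HB Require Import structures.
From mathcomp Require Import all_boot all_order all_algebra.
From mathcomp Require Import all_classical all_reals all_analysis.
Set Implicit Arguments. Unset Strict Implicit. Unset Printing Implicit Defensive.
Import Order.TTheory GRing.Theory Num.Theory.
Import numFieldNormedType.Exports.
Local Open Scope ring_scope.

Section Defs.
Variables (R : realType) (d : nat).
Local Notation M := 'M[R]_d.

Definition low (A : M) : M := \matrix_(i, j) (if (j < i)%N then A i j else 0).

Definition comm (A B : M) : M := A *m B - B *m A.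

Definition frob (A : M) : R := Num.sqrt (\sum_i \sum_j (A i j) ^+ 2).

Definition expm (A : M) : M :=
  limn (fun n : nat => \sum_(k < n) ((k`!)%:R^-1 *: (A ^+ k))).

Definition skew_mx (A : M) : Prop := A^T = - A.
Definition orthogonal_mx (U : M) : Prop := U^T *m U = 1%:M.
End Defs.

(* Each summand is a combination of traces Tr(A^T B) of lower parts of
   commutators of K with X, taken at the origin or differentiated there, so by
   |Tr(A^T B)| <= ||A|| ||B||, ||low A|| <= ||A|| and ||[A, X]|| <= 2 ||A|| ||X||
   it is at most 16 ||K|| ||dK|| ||X||^2.  At the origin K = U_o^T M_n U_o has
   norm ||M_n||; as e^(aY) = 1 + aY + O(a^2), the alpha-derivative of K is
   Y^T K + K Y, of norm at most 2 ||M_n||, and the sigma-derivative is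
   U_o^T W_n U_o, of norm at most 1.  Summing over n (with Cauchy-Schwarz for
   sigma) gives the constants. *)

From HB Require Import structures.
From mathcomp Require Import all_boot all_order all_algebra.
From mathcomp Require Import all_classical all_reals all_analysis.
From mathcomp Require Import ring lra.
Import Order.TTheory GRing.Theory Num.Theory.
Import numFieldNormedType.Exports.
Set Implicit Arguments. Unset Strict Implicit.
Local Open Scope ring_scope.

Lemma sumr_CauchySchwarz (R : realFieldType) (I : finType) (a b : I -> R) :
  (\sum_i a i * b i) ^+ 2 <= (\sum_i a i ^+ 2) * (\sum_i b i ^+ 2).
Proof.
pose sq (F : I -> I -> R) := \sum_i \sum_j F i j.
have prod_sq : sq (fun i j => (a i * b j) ^+ 2) = (\sum_i a i ^+ 2) * (\sum_i b i ^+ 2).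
  rewrite /sq mulr_suml; apply: eq_bigr => i _; rewrite mulr_sumr.
  by apply: eq_bigr => j _; rewrite exprMn.
have prod_sq' : sq (fun i j => (a j * b i) ^+ 2) = (\sum_i a i ^+ 2) * (\sum_i b i ^+ 2).
  by rewrite -prod_sq /sq exchange_big.
have cross : sq (fun i j => (a i * b j) * (a j * b i)) = (\sum_i a i * b i) ^+ 2.
  rewrite /sq expr2 mulr_suml; apply: eq_bigr => i _; rewrite mulr_sumr.
  by apply: eq_bigr => j _; ring.
have lagrange : sq (fun i j => (a i * b j - a j * b i) ^+ 2) =
    sq (fun i j => (a i * b j) ^+ 2) + sq (fun i j => (a j * b i) ^+ 2)
    - 2 * sq (fun i j => (a i * b j) * (a j * b i)).
  rewrite /sq -big_split /= mulr_sumr -sumrB; apply: eq_bigr => i _.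
  by rewrite -big_split /= mulr_sumr -sumrB; apply: eq_bigr => j _; ring.
have : 0 <= sq (fun i j => (a i * b j - a j * b i) ^+ 2).
  by apply: sumr_ge0 => i _; apply: sumr_ge0 => j _; apply: sqr_ge0.
rewrite lagrange prod_sq prod_sq' cross; lra.
Qed.

Lemma sumr_le_sqrt_card (R : rcfType) (I : finType) (a : I -> R) :
  \sum_i a i <= Num.sqrt #|I|%:R * Num.sqrt (\sum_i a i ^+ 2).
Proof.
have cs : (\sum_i a i) ^+ 2 <= #|I|%:R * \sum_i a i ^+ 2.
  have -> : \sum_i a i = \sum_i 1 * a i by apply: eq_bigr => i _; rewrite mul1r.
  have -> : #|I|%:R = \sum_(i : I) (1 : R) ^+ 2.
    by rewrite (eq_bigr (fun=> 1)) ?sumr_const // => i _; rewrite expr1n.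
  exact: sumr_CauchySchwarz.
apply: le_trans (ler_norm _) _.
rewrite -sqrtrM ?ler0n // -sqrtr_sqr ler_sqrt //.
by apply: mulr_ge0; rewrite ?ler0n ?sumr_ge0 // => i _; rewrite sqr_ge0.
Qed.

Section Frobenius.
Variables (R : realType) (d : nat).
Local Notation M := 'M[R]_d.
Implicit Types A B U : M.

Lemma frob_ge0 A : 0 <= frob A.
Proof. exact: sqrtr_ge0. Qed.

Lemma sqr_frob A : frob A ^+ 2 = \sum_i \sum_j A i j ^+ 2.
Proof.
by rewrite sqr_sqrtr //; apply: sumr_ge0 => i _; apply: sumr_ge0 => j _; apply: sqr_ge0.
Qed.

Lemma frob_le_sqr A r : 0 <= r -> frob A ^+ 2 <= r ^+ 2 -> frob A <= r.
Proof. by move=> r0; rewrite ler_sqr ?nnegrE ?frob_ge0. Qed.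

Lemma mxtrace_trmx_mul A B : \tr (A^T *m B) = \sum_i \sum_j A i j * B i j.
Proof.
rewrite /mxtrace exchange_big; apply: eq_bigr => i _; rewrite mxE.
by apply: eq_bigr => j _; rewrite mxE.
Qed.

Lemma mxtrace_trmx_mulC A B : \tr (A^T *m B) = \tr (B^T *m A).
Proof.
by rewrite !mxtrace_trmx_mul; apply: eq_bigr => i _; apply: eq_bigr => j _; rewrite mulrC.
Qed.

Lemma frob_mxtrace A : frob A = Num.sqrt (\tr (A^T *m A)).
Proof.
rewrite mxtrace_trmx_mul /frob.
by congr Num.sqrt; apply: eq_bigr => i _; apply: eq_bigr => j _; rewrite expr2.
Qed.

Lemma normr_mxtrace_le A B : `|\tr (A^T *m B)| <= frob A * frob B.
Proof.
rewrite -(ler_sqr (normr_ge0 _)) ?nnegrE ?mulr_ge0 ?frob_ge0 //.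
rewrite real_normK ?num_real // exprMn !sqr_frob mxtrace_trmx_mul !pair_bigA /=.
exact: sumr_CauchySchwarz.
Qed.

Lemma frobZ a A : frob (a *: A) = `|a| * frob A.
Proof.
rewrite /frob -sqrtr_sqr -sqrtrM ?sqr_ge0 // mulr_sumr; congr Num.sqrt.
by apply: eq_bigr => i _; rewrite mulr_sumr; apply: eq_bigr => j _; rewrite mxE exprMn.
Qed.

Lemma frob0 : frob (0 : M) = 0.
Proof. by rewrite -(scale0r (0 : M)) frobZ normr0 mul0r. Qed.

Lemma frobN A : frob (- A) = frob A.
Proof. by rewrite -scaleN1r frobZ normrN normr1 mul1r. Qed.

Lemma frobD A B : frob (A + B) <= frob A + frob B.
Proof.
apply: frob_le_sqr; first by rewrite addr_ge0 ?frob_ge0.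
have sqrD : frob (A + B) ^+ 2 = frob A ^+ 2 + frob B ^+ 2 + 2 * \tr (A^T *m B).
  rewrite !sqr_frob mxtrace_trmx_mul mulr_sumr -!big_split /=; apply: eq_bigr => i _.
  by rewrite mulr_sumr -!big_split /=; apply: eq_bigr => j _; rewrite mxE; ring.
have := ler_norm (\tr (A^T *m B)); have := normr_mxtrace_le A B.
rewrite sqrD sqrrD; lra.
Qed.

Lemma frob_trmx A : frob A^T = frob A.
Proof.
rewrite /frob exchange_big; congr Num.sqrt.
by apply: eq_bigr => i _; apply: eq_bigr => j _; rewrite mxE.
Qed.

Lemma frob_low A : frob (low A) <= frob A.
Proof.
rewrite ler_sqrt; last by apply: sumr_ge0 => i _; apply: sumr_ge0 => j _; apply: sqr_ge0.
apply: ler_sum => i _; apply: ler_sum => j _.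
by rewrite mxE; case: ifP => _ //; rewrite expr0n sqr_ge0.
Qed.

Lemma frob_mulmx A B : frob (A *m B) <= frob A * frob B.
Proof.
apply: frob_le_sqr; first by rewrite mulr_ge0 ?frob_ge0.
rewrite exprMn !sqr_frob mulr_suml; apply: ler_sum => i _.
rewrite exchange_big mulr_sumr; apply: ler_sum => j _.
by rewrite mxE; apply: sumr_CauchySchwarz.
Qed.

Lemma frob_comm A B : frob (comm A B) <= 2 * frob A * frob B.
Proof.
apply: le_trans (frobD _ _) _; rewrite frobN.
have := frob_mulmx A B; have := frob_mulmx B A; rewrite [frob B * _]mulrC; lra.
Qed.

Lemma frob_trmx_mul_add_mul_le A B :
  frob (B^T *m A + A *m B) <= 2 * frob B * frob A.
Proof.
apply: le_trans (frobD _ _) _; have := frob_mulmx B^T A; have := frob_mulmx A B.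
rewrite frob_trmx; lra.
Qed.

Lemma frob_conj_orthogonal U A : orthogonal_mx U -> frob (U^T *m A *m U) = frob A.
Proof.
move=> orthoU; have UUt : U *m U^T = 1%:M by apply: mulmx1C.
rewrite !frob_mxtrace !trmx_mul trmxK !mulmxA -[_ *m U *m U^T]mulmxA UUt mulmx1.
by rewrite -!mulmxA mxtrace_mulC !mulmxA -[_ *m U *m U^T]mulmxA UUt mulmx1.
Qed.

Lemma mx_norm_le_frob A : `|A| <= frob A.
Proof.
rewrite [leLHS]/Num.Def.normr /= mx_normrE; apply: bigmax_le; first exact: frob_ge0.
move=> [i j] _ /=; rewrite -(ler_sqr (normr_ge0 _)) ?nnegrE ?frob_ge0 //.
rewrite real_normK ?num_real // sqr_frob (bigD1 i) //= (bigD1 j) //= -addrA lerDl.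
rewrite addr_ge0 //; first by apply: sumr_ge0 => k _; apply: sqr_ge0.
by apply: sumr_ge0 => k _; apply: sumr_ge0 => l _; apply: sqr_ge0.
Qed.

Lemma frob_le_mx_norm A : frob A <= d%:R * `|A|.
Proof.
apply: frob_le_sqr; first by rewrite mulr_ge0 ?normr_ge0.
have entry_le i j : A i j ^+ 2 <= `|A| ^+ 2.
  rewrite -real_normK ?num_real // lerXn2r ?nnegrE //.
  by rewrite [leRHS]/Num.Def.normr /= mx_normrE; apply/bigmax_geP; right; exists (i, j).
rewrite sqr_frob exprMn -natrX (@le_trans _ _ (\sum_(i < d) \sum_(j < d) `|A| ^+ 2)) //.
  by apply: ler_sum => i _; apply: ler_sum => j _.
by rewrite !sumr_const !card_ord -mulrnA mulr_natl mulnn.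
Qed.

Lemma frob_eq0 A : frob A <= 0 -> A = 0.
Proof. by move=> /(le_trans (mx_norm_le_frob A)); rewrite normr_le0 => /eqP. Qed.

End Frobenius.

Section MatrixExponential.
Variables (R : realType) (d : nat).
Local Notation M := 'M[R]_d.

(* The library equips matrices with complete and with normed-module structures
   but does not declare their join, which [normed_cvg] needs. *)
HB.instance Definition _ := Complete.on M.

Lemma frob_exprS_le (A : M) k : frob (A ^+ k.+1) <= frob A ^+ k.+1.
Proof.
elim: k => [|k IHk]; first by rewrite !expr1.
rewrite exprS [X in _ <= X]exprS; apply: le_trans (frob_mulmx _ _) _.
by apply: ler_pM; rewrite ?frob_ge0.
Qed.

Lemma normr_expm_sub_le (A : M) : frob A <= 2^-1 ->
  `|expm A - 1 - A| <= 2 * frob A ^+ 2.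
Proof.
move=> small_A; set r := frob A; have r0 : 0 <= r := frob_ge0 A.
pose u k : M := (k`!%:R)^-1 *: A ^+ k.
have u0 : u 0%N = 1 by rewrite /u invr1 scale1r expr0.
have u1 : u 1%N = A by rewrite /u invr1 scale1r expr1.
have norm_uS k : `|u k.+1| <= r ^+ k.+1.
  apply: le_trans (mx_norm_le_frob _) _; rewrite frobZ ger0_norm ?invr_ge0 ?ler0n //.
  apply: le_trans (frob_exprS_le _ _); rewrite ler_piMl ?frob_ge0 //.
  by rewrite invf_le1 ?ltr0n ?fact_gt0 // ler1n fact_gt0.
have norm_uSS k : `|u k.+2| <= geometric (r ^+ 2) 2^-1 k.
  apply: le_trans (norm_uS _) _; rewrite /= -addn2 exprD mulrC ler_wpM2l ?exprn_ge0 //.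
  by rewrite lerXn2r ?nnegrE.
have cvg_u : cvgn (series u).
  apply: normed_cvg; apply: (@series_le_cvg _ _ (geometric (`|u 0%N| + 1) 2^-1)).
  - by move=> k /=.
  - by move=> k; rewrite geometric_ge0 ?addr_ge0.
  - case=> [|k]; first by rewrite /= expr0 mulr1 lerDl.
    apply: le_trans (norm_uS k) _; rewrite /= -[leLHS]mul1r.
    rewrite ler_pM ?exprn_ge0 ?lerDr ?lerXn2r ?nnegrE //.
  - by apply: is_cvg_geometric_series; rewrite ger0_norm // invf_lt1 // ltr1n.
have -> : expm A = limn (series u).
  by rewrite /expm; congr (limn _); apply/funext => n; rewrite /series /= big_mkord.
rewrite -addrA -opprD -normrN opprB.
(* From the third one on, the partial sums lie in this closed ball. *)
suff : closed_ball_ Num.Def.normr (1 + A) (2 * r ^+ 2) (limn (series u)) by [].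
apply: (closed_cvg _ (@closed_closed_ball_ _ M _ _) _ _ cvg_u); exists 2%N => // -[|[|m]] // _.
rewrite /closed_ball_ /= /series /= big_nat_recl // big_nat_recl // u0 u1.
rewrite addrA opprD addrA subrr sub0r normrN; apply: le_trans (ler_norm_sum _ _ _) _.
have -> : 2 * r ^+ 2 = r ^+ 2 / (1 - 2^-1) by field.
apply: le_trans (geometric_le_lim m (sqr_ge0 r) _ _).
- by apply: ler_sum => k _; apply: norm_uSS.
- by rewrite invr_gt0.
- by rewrite ger0_norm // invf_lt1 // ltr1n.
Qed.
End MatrixExponential.

Section FirstOrderExpansion.
Variables (R : realType) (d : nat).
Local Notation M := 'M[R]_d.
Implicit Types A B X Y : M.

(* Unlike differentiability, this quantitative expansion is stable under
   products and bounded linear maps, and the exponential provides it. *)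
Definition taylor1 (f : R -> M) (f0 f1 : M) :=
  exists C : R, \forall h \near (0 : R), frob (f h - f0 - h *: f1) <= C * h ^+ 2.

Lemma taylor1_at0 (f : R -> M) (f0 f1 : M) : taylor1 f f0 f1 -> f 0 = f0.
Proof.
move=> [C /nbhs_singleton]; rewrite scale0r subr0 expr0n mulr0.
by move=> /frob_eq0 /eqP; rewrite subr_eq0 => /eqP.
Qed.

Lemma derive1_taylor1 (f : R -> M) (f0 f1 : M) : taylor1 f f0 f1 -> derive1 f 0 = f1.
Proof.
move=> tf; have f0E := taylor1_at0 tf; case: tf => C fC.
rewrite /derive1; apply: norm_cvg_lim; apply/cvgrPdist_le => e e0.
have Ce0 : 0 < e / (`|C| + 1) by rewrite divr_gt0 // ltr_wpDl.
near=> h.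
have h0 : h != 0 by near: h; exact: nbhs_dnbhs_neq.
have small_h : `|h| * (`|C| + 1) <= e.
  by rewrite -ler_pdivlMr ?ltr_wpDl //; near: h; exact: dnbhs0_le.
have hC : frob (f h - f0 - h *: f1) <= C * h ^+ 2 by near: h; exact: nbhs_dnbhs fC.
rewrite addr0 f0E.
have -> : f1 - h^-1 *: (f h - f0) = - (h^-1 *: (f h - f0 - h *: f1)).
  by rewrite [in RHS]scalerBr scalerA mulVf // scale1r opprB.
rewrite normrN normrZ normfV.
apply: le_trans (ler_wpM2l _ (le_trans (mx_norm_le_frob _) hC)) _; first by rewrite invr_ge0.
have -> : `|h|^-1 * (C * h ^+ 2) = C * `|h|.
  by rewrite -real_normK ?num_real //; field; rewrite normr_eq0.
have := ler_norm C; have := normr_ge0 h; nra.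
Unshelve. all: by end_near.
Qed.

Lemma taylor1_affine A B : taylor1 (fun h => A + h *: B) A B.
Proof.
by exists 0; near=> h; rewrite addrAC addrK subrr frob0 mul0r.
Unshelve. all: by end_near.
Qed.

Lemma taylor1_cst A : taylor1 (fun=> A) A 0.
Proof.
by exists 0; near=> h; rewrite scaler0 !subr0 subrr frob0 mul0r.
Unshelve. all: by end_near.
Qed.

Lemma taylor1_bounded (f : R -> M) (f0 f1 : M) : taylor1 f f0 f1 ->
  exists b, \forall h \near (0 : R), frob (f h) <= b.
Proof.
move=> [C fC]; exists (`|C| + frob f0 + frob f1); near=> h.
have h1 : `|h| <= 1 by near: h; exact: (@nbhs0_le R R 1 ltr01).
have hC : frob (f h - f0 - h *: f1) <= C * h ^+ 2 by near: h; exact: fC.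
have r_le : C * h ^+ 2 <= `|C|.
  rewrite -real_normK ?num_real //; apply: le_trans (ler_norm _) _.
  by rewrite normrM normrX normr_id ler_piMr ?normr_ge0 // exprn_ile1.
have hf1_le : frob (h *: f1) <= frob f1 by rewrite frobZ ler_piMl ?frob_ge0.
have -> : f h = (f h - f0 - h *: f1) + h *: f1 + f0 by rewrite !subrK.
apply: le_trans (frobD _ _) _; have := frobD (f h - f0 - h *: f1) (h *: f1); lra.
Unshelve. all: by end_near.
Qed.

Lemma taylor1_linear (L : M -> M) c (f : R -> M) (f0 f1 : M) : linear L ->
    (forall A, frob (L A) <= c * frob A) ->
  taylor1 f f0 f1 -> taylor1 (L \o f) (L f0) (L f1).
Proof.
move=> linL boundL [C fC]; exists (`|c| * C); near=> h.
have -> : L (f h) - L f0 - h *: L f1 = L (f h - f0 - h *: f1).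
  by rewrite !(zmod_morphism_linear linL) (scalable_linear linL).
apply: le_trans (boundL _) _; apply: le_trans (ler_wpM2r (frob_ge0 _) (ler_norm c)) _.
by rewrite -mulrA ler_wpM2l //; near: h; exact: fC.
Unshelve. all: by end_near.
Qed.

Lemma taylor1_mul (f g : R -> M) A0 A1 B0 B1 : taylor1 f A0 A1 -> taylor1 g B0 B1 ->
  taylor1 (fun h => f h *m g h) (A0 *m B0) (A1 *m B0 + A0 *m B1).
Proof.
move=> [CA fC] tg; have [bg gb] := taylor1_bounded tg; case: tg => [CB gC].
have [ba ab] := taylor1_bounded (taylor1_affine A0 A1).
exists (CA * bg + ba * CB + frob A1 * frob B1); near=> h.
have expand : f h *m g h - A0 *m B0 - h *: (A1 *m B0 + A0 *m B1) =
    (f h - A0 - h *: A1) *m g h + (A0 + h *: A1) *m (g h - B0 - h *: B1)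
    + h ^+ 2 *: (A1 *m B1).
  rewrite !(mulmxBl, mulmxDl, mulmxBr, mulmxDr) -!scalemxAl -!scalemxAr !scalerA.
  by apply/matrixP => i j; rewrite !mxE; ring.
have fh : frob (f h - A0 - h *: A1) <= CA * h ^+ 2 by near: h; exact: fC.
have gh : frob (g h - B0 - h *: B1) <= CB * h ^+ 2 by near: h; exact: gC.
have gh_le : frob (g h) <= bg by near: h; exact: gb.
have ah_le : frob (A0 + h *: A1) <= ba by near: h; exact: ab.
rewrite expand; apply: le_trans (frobD _ _) _; apply: le_trans (lerD (frobD _ _) (lexx _)) _.
rewrite frobZ normrX real_normK ?num_real //.
have t1 := le_trans (frob_mulmx _ _) (ler_pM (frob_ge0 _) (frob_ge0 _) fh gh_le).
have t2 := le_trans (frob_mulmx _ _) (ler_pM (frob_ge0 _) (frob_ge0 _) ah_le gh).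
have t3 := ler_wpM2l (sqr_ge0 h) (frob_mulmx A1 B1).
have -> : (CA * bg + ba * CB + frob A1 * frob B1) * h ^+ 2 =
  CA * h ^+ 2 * bg + ba * (CB * h ^+ 2) + h ^+ 2 * (frob A1 * frob B1) by ring.
by rewrite lerD ?lerD.
Unshelve. all: by end_near.
Qed.

Lemma low_is_linear : linear (@low R d).
Proof.
by move=> a A B; apply/matrixP => i j; rewrite !mxE; case: ifP; rewrite ?mulr0 ?addr0.
Qed.

Lemma comm_is_linear X : linear (fun A => comm A X).
Proof.
move=> a A B; rewrite /comm mulmxDl mulmxDr -scalemxAl -scalemxAr.
by rewrite scalerBr opprD addrACA.
Qed.

Lemma taylor1_low (f : R -> M) f0 f1 : taylor1 f f0 f1 ->
  taylor1 (fun h => low (f h)) (low f0) (low f1).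
Proof. by apply: (taylor1_linear low_is_linear (c := 1)) => A; rewrite mul1r frob_low. Qed.

Lemma taylor1_comm X (f : R -> M) f0 f1 : taylor1 f f0 f1 ->
  taylor1 (fun h => comm (f h) X) (comm f0 X) (comm f1 X).
Proof.
apply: (taylor1_linear (comm_is_linear X) (c := 2 * frob X)) => A.
by rewrite mulrAC frob_comm.
Qed.

Lemma taylor1_trmx (f : R -> M) f0 f1 : taylor1 f f0 f1 ->
  taylor1 (fun h => (f h)^T) f0^T f1^T.
Proof. by apply: (taylor1_linear (linearP trmx) (c := 1)) => A; rewrite mul1r frob_trmx. Qed.

Lemma taylor1_expm Y : taylor1 (fun a => expm (a *: Y)) 1 Y.
Proof.
exists (2 * d%:R * frob Y ^+ 2); near=> h.
have small_h : `|h| * frob Y <= 2^-1.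
  have : `|h| * (2 * frob Y + 1) <= 1.
    rewrite -ler_pdivlMr ?mul1r; last by have := frob_ge0 Y; lra.
    by near: h; apply: (@nbhs0_le R R); rewrite invr_gt0; have := frob_ge0 Y; lra.
  have := normr_ge0 h; nra.
rewrite -frobZ in small_h.
have -> : 2 * d%:R * frob Y ^+ 2 * h ^+ 2 = d%:R * (2 * frob (h *: Y) ^+ 2).
  by rewrite frobZ exprMn real_normK ?num_real //; ring.
apply: le_trans (frob_le_mx_norm _) _.
by rewrite ler_wpM2l ?ler0n ?normr_expm_sub_le.
Unshelve. all: by end_near.
Qed.

Lemma taylor1_conj_expm A Y :
  taylor1 (fun a => (expm (a *: Y))^T *m A *m expm (a *: Y)) A (Y^T *m A + A *m Y).
Proof.
have tE := taylor1_expm Y.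
have := taylor1_mul (taylor1_mul (taylor1_trmx tE) (taylor1_cst A)) tE.
by rewrite trmx1 mul1mx mulmx0 addr0 !mulmx1.
Qed.

Lemma normr_tr_low_comm_derive_le X K0 K1 (f : R -> M) : taylor1 f K0 K1 ->
  `|\tr ((low (comm (f 0) X))^T *m derive1 (fun h => low (comm (f h) X)) 0)
    + \tr ((derive1 (fun h => low (comm (f h) X)) 0)^T *m low (comm (f 0) X))
    + \tr ((low (comm (comm (f 0) X) X))^T *m derive1 (fun h => low (f h)) 0)
    + \tr ((derive1 (fun h => low (f h)) 0)^T *m low (comm (comm (f 0) X) X))|
  <= 16 * frob K0 * frob K1 * frob X ^+ 2.
Proof.
move=> tf; rewrite (taylor1_at0 tf).
rewrite (derive1_taylor1 (taylor1_low (taylor1_comm X tf))).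
rewrite (derive1_taylor1 (taylor1_low tf)).
rewrite [T in _ + T + _ + _]mxtrace_trmx_mulC [T in _ + T]mxtrace_trmx_mulC.
set t1 := \tr (_ *m low (comm K1 X)); set t3 := \tr (_ *m low K1).
have gd0 : frob (low (comm K0 X)) <= 2 * frob K0 * frob X.
  exact: le_trans (frob_low _) (frob_comm _ _).
have gd1 : frob (low (comm K1 X)) <= 2 * frob K1 * frob X.
  exact: le_trans (frob_low _) (frob_comm _ _).
have gdd0 : frob (low (comm (comm K0 X) X)) <= 4 * frob K0 * frob X ^+ 2.
  apply: le_trans (frob_low _) _; apply: le_trans (frob_comm _ _) _.
  have := frob_comm K0 X; have := frob_ge0 X; nra.
have t1_le := le_trans (normr_mxtrace_le _ _) (ler_pM (frob_ge0 _) (frob_ge0 _) gd0 gd1).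
have t3_le := le_trans (normr_mxtrace_le _ _)
  (ler_pM (frob_ge0 _) (frob_ge0 _) gdd0 (frob_low K1)).
have -> : t1 + t1 + t3 + t3 = 2 * (t1 + t3) by ring.
rewrite normrM ger0_norm //; apply: le_trans (ler_wpM2l _ (ler_normD _ _)) _ => //.
have -> : 16 * frob K0 * frob K1 * frob X ^+ 2 =
  2 * (2 * frob K0 * frob X * (2 * frob K1 * frob X) + 4 * frob K0 * frob X ^+ 2 * frob K1).
  by ring.
by rewrite ler_wpM2l // lerD.
Qed.
End FirstOrderExpansion.

Unset Implicit Arguments.

Theorem lemma11 (R : realType) (d N : nat)
  (V : 'M[R]_d) (Lam : 'I_N -> 'rV[R]_d) (W : 'I_N -> 'M[R]_d)
  (Uo Y X : 'M[R]_d) :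
  V \in unitmx ->
  (forall n, frob (W n) <= 1) ->
  orthogonal_mx Uo ->
  (forall n, low (Uo^T *m (V *m diag_mx (Lam n) *m invmx V) *m Uo) = 0) ->
  skew_mx Y -> frob Y = 1 -> skew_mx X ->
  let Mn := fun n => V *m diag_mx (Lam n) *m invmx V in
  let U := fun a : R => Uo *m expm (a *: Y) in
  let K := fun n (a s : R) => (U a)^T *m (Mn n + s *: W n) *m U a in
  let g := fun n a s => low (K n a s) in
  let gd := fun n a s => low (comm (K n a s) X) in
  let gdd := fun n a s => low (comm (comm (K n a s) X) X) in
  let da := fun (f : R -> R -> 'M[R]_d) => derive1 (fun a => f a 0) 0 in
  let ds := fun (f : R -> R -> 'M[R]_d) => derive1 (fun s => f 0 s) 0 in
  let At_a := `| \sum_(n < N)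
      \tr ((gd n 0 0)^T *m da (gd n) + (gd n 0 0)^T *m da (gd n)
           + (gdd n 0 0)^T *m da (g n) + (da (g n))^T *m gdd n 0 0) | in
  let At_s := `| \sum_(n < N)
      \tr ((gd n 0 0)^T *m ds (gd n) + (ds (gd n))^T *m gd n 0 0
           + (gdd n 0 0)^T *m ds (g n) + (ds (g n))^T *m gdd n 0 0) | in
  let A_a := 32 * \sum_(n < N) frob (Mn n) ^+ 2 in
  let A_s := 16 * Num.sqrt (N%:R) * Num.sqrt (\sum_(n < N) frob (Mn n) ^+ 2) in
  At_a <= A_a * frob X ^+ 2 /\ At_s <= A_s * frob X ^+ 2.
Proof.
move=> _ normW orthoUo _ _ normY _ Mn U K g gd gdd da ds At_a At_s A_a A_s.
pose P n := Uo^T *m Mn n *m Uo.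
have frobP n : frob (P n) = frob (Mn n) := frob_conj_orthogonal _ orthoUo.
have K_a n : taylor1 (fun a => K n a 0) (P n) (Y^T *m P n + P n *m Y).
  have -> : (fun a => K n a 0) = fun a => (expm (a *: Y))^T *m P n *m expm (a *: Y).
    by apply/funext => a; rewrite /K /U scale0r addr0 trmx_mul !mulmxA.
  exact: taylor1_conj_expm.
have K_s n : taylor1 (fun s => K n 0 s) (P n) (Uo^T *m W n *m Uo).
  have expm0 : expm (0 *: Y) = 1 := taylor1_at0 (taylor1_expm Y).
  have -> : (fun s => K n 0 s) = fun s => P n + s *: (Uo^T *m W n *m Uo).
    apply/funext => s; rewrite /K /U expm0 mulmx1.
    by rewrite mulmxDr mulmxDl -scalemxAr -scalemxAl.
  exact: taylor1_affine.
split.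
- rewrite /At_a /A_a -mulrA mulr_suml mulr_sumr.
  apply: le_trans (ler_norm_sum _ _ _) (ler_sum _ _) => n _.
  rewrite !mxtraceD [T in _ + T + _ + _]mxtrace_trmx_mulC.
  apply: le_trans (normr_tr_low_comm_derive_le X (K_a n)) _.
  have := frob_trmx_mul_add_mul_le (P n) Y; rewrite normY frobP => frobL.
  have -> : 32 * (frob (Mn n) ^+ 2 * frob X ^+ 2) =
    16 * frob (Mn n) * (2 * 1 * frob (Mn n)) * frob X ^+ 2 by ring.
  by rewrite ler_wpM2r ?sqr_ge0 // ler_wpM2l ?mulr_ge0 ?frob_ge0.
- apply: le_trans (ler_norm_sum _ _ _) _.
  apply: (@le_trans _ _ (\sum_(n < N) 16 * frob (Mn n) * frob X ^+ 2)).
    apply: ler_sum => n _; rewrite !mxtraceD.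
    apply: le_trans (normr_tr_low_comm_derive_le X (K_s n)) _.
    rewrite frobP ler_wpM2r ?sqr_ge0 // -[leRHS]mulr1 ler_wpM2l ?mulr_ge0 ?frob_ge0 //.
    by rewrite frob_conj_orthogonal.
  rewrite -mulr_suml -mulr_sumr /A_s ler_wpM2r ?sqr_ge0 // -mulrA ler_wpM2l //.
  by have := sumr_le_sqrt_card (fun n : 'I_N => frob (Mn n)); rewrite card_ord.
Qed.
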